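(* Let $A\in\mathbb{C}^{n\times m}$, $\alpha_1\ge1/\sqrt{n}$, $\alpha_2\ge1/\sqrt{m}$, $B\in\mathbb{C}^{l\times n}$, $b\in\mathbb{R}^l$, $D\in\mathbb{C}^{q\times m}$, $d\in\mathbb{R}^q$, and define $$S_1=\Big\{u\in\mathbb{C}^n:\|u\|\le\alpha_1,\ \operatorname{Re}(u)\ge0,\ \textstyle\sum_{i=1}^n u_i=1,\ \operatorname{Re}(Bu)\le b\Big\},$$ $$S_2=\Big\{v\in\mathbb{C}^m:\|v\|\le\alpha_2,\ \operatorname{Re}(v)\ge0,\ \textstyle\sum_{i=1}^m v_i=1,\ \operatorname{Re}(Dv)\ge d\Big\},$$ and $f(u,v)=\operatorname{Re}(u^HAv)$. Assume (Slater condition) that there exist $u\in S_1$ and $v\in S_2$ for which all the defining inequality constraints of $S_1$ and of $S_2$ hold strictly. Then there exists $(u^\star,v^\star)\in S_1\times S_2$ such that $$f(u,v^\star)\le f(u^\star,v^\star)\le f(u^\star,v)\qquad\forall u\in S_1,\ v\in S_2.$$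
   Context: $\|\cdot\|$ is the Euclidean norm on $\mathbb{C}^k$, $u^H$ is the conjugate transpose, inequalities between real vectors are componentwise, and $\sum_i u_i=1$ is an equality of complex numbers. Player 1 (choosing $u$) maximizes $f$ and player 2 (choosing $v$) minimizes $f$. *)

From HB Require Import structures.
From mathcomp Require Import all_boot all_order all_algebra.
From mathcomp Require Import complex reals.
Set Implicit Arguments. Unset Strict Implicit. Unset Printing Implicit Defensive.
Import Order.TTheory GRing.Theory Num.Theory.
Local Open Scope ring_scope.

Section Defs.
Variable R : realType.

Definition cnorm k (u : 'cV[R[i]]_k) : R :=
  Num.sqrt (\sum_(i < k) ((complex.Re (u i 0)) ^+ 2 + (complex.Im (u i 0)) ^+ 2)).

Definition ctr p k (u : 'M[R[i]]_(p, k)) : 'M[R[i]]_(k, p) :=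
  (map_mx (@conjc R) u)^T.

Definition payoff n m (A : 'M[R[i]]_(n, m)) (u : 'cV[R[i]]_n) (v : 'cV[R[i]]_m) : R :=
  complex.Re ((ctr u *m A *m v) 0 0).

Definition S1 n l (alpha1 : R) (B : 'M[R[i]]_(l, n)) (b : 'cV[R]_l)
    (u : 'cV[R[i]]_n) : Prop :=
  [/\ cnorm u <= alpha1,
      (forall i, 0 <= complex.Re (u i 0)),
      \sum_(i < n) u i 0 = 1
    & (forall k, complex.Re ((B *m u) k 0) <= b k 0)].

Definition S2 m q (alpha2 : R) (D : 'M[R[i]]_(q, m)) (d : 'cV[R]_q)
    (v : 'cV[R[i]]_m) : Prop :=
  [/\ cnorm v <= alpha2,
      (forall i, 0 <= complex.Re (v i 0)),
      \sum_(i < m) v i 0 = 1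
    & (forall k, d k 0 <= complex.Re ((D *m v) k 0))].

Definition S1_strict n l (alpha1 : R) (B : 'M[R[i]]_(l, n)) (b : 'cV[R]_l)
    (u : 'cV[R[i]]_n) : Prop :=
  [/\ cnorm u < alpha1,
      (forall i, 0 < complex.Re (u i 0)),
      \sum_(i < n) u i 0 = 1
    & (forall k, complex.Re ((B *m u) k 0) < b k 0)].

Definition S2_strict m q (alpha2 : R) (D : 'M[R[i]]_(q, m)) (d : 'cV[R]_q)
    (v : 'cV[R[i]]_m) : Prop :=
  [/\ cnorm v < alpha2,
      (forall i, 0 < complex.Re (v i 0)),
      \sum_(i < m) v i 0 = 1
    & (forall k, d k 0 < complex.Re ((D *m v) k 0))].
End Defs.

(* Under the identification C^n = R^(2n), S1 and S2 become compact convex sets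
   and f a real bilinear function, so this is von Neumann's minimax theorem.
   Its core is a strict minimax lemma: if every x in X is beaten by some y in Y,
   i.e. f x y < c, then a single y beats every x.  By compactness finitely many
   y_i suffice; minimizing the penalty sum_i ((c - f x y_i)_+)^2 over X, the
   first-order optimality condition at a minimizer x0 shows that the convex
   combination of the y_i with weights (c - f x0 y_i)_+ beats every x.
   Applied at v = sup_x inf_y f x y, to f and to the transpose of -f, this
   lemma yields a maximin point and a minimax point, which form a saddle point. *)

From HB Require Import structures.
From mathcomp Require Import all_boot all_order all_algebra.
From mathcomp Require Import complex reals.
From mathcomp Require Import classical_sets boolp topology normedtype derive.
From mathcomp Require Import realfun ring lra finmap.
Set Implicit Arguments. Unset Strict Implicit. Unset Printing Implicit Defensive.
Import Order.TTheory GRing.Theory Num.Theory.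
Import numFieldNormedType.Exports.
Local Open Scope ring_scope.
Local Open Scope classical_set_scope.

Section Minimax.
Context {R : realType}.

Definition convex_rV N (X : set 'rV[R]_N) :=
  forall x1 x2 (s : R), X x1 -> X x2 -> 0 <= s <= 1 -> X (x1 + s *: (x2 - x1)).

Definition affine N (g : 'rV[R]_N -> R) :=
  forall x1 x2 (s : R), g (x1 + s *: (x2 - x1)) = g x1 + s * (g x2 - g x1).

Lemma affineN N (g : 'rV[R]_N -> R) : affine g -> affine (fun x => - g x).
Proof. by move=> affg x1 x2 s; rewrite affg; ring. Qed.

Lemma affineBl N (c : R) (g : 'rV[R]_N -> R) : affine g -> affine (fun x => c - g x).
Proof. by move=> affg x1 x2 s; rewrite affg; ring. Qed.

Definition pos_part (t : R) := Num.max t 0.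

Lemma pos_part_ge0 t : 0 <= pos_part t.
Proof. by rewrite le_max lexx orbT. Qed.

Lemma pos_part_continuous : continuous pos_part.
Proof. by move=> t; apply: continuous_max; [exact: cvg_id | exact: cvg_cst]. Qed.

Lemma pos_partM t : pos_part t * t = pos_part t ^+ 2.
Proof. by rewrite /pos_part /Order.max; case: ltP; rewrite expr2 ?mul0r. Qed.

Lemma sqr_pos_partD t d :
  pos_part (t + d) ^+ 2 <= pos_part t ^+ 2 + 2 * pos_part t * d + d ^+ 2.
Proof.
by rewrite /pos_part /Order.max; case: ltP => t0; case: ltP => td0; nra.
Qed.

Lemma sum_sqr_pos_part_minimizer N (X : set 'rV[R]_N) (I : Type) (r : seq I)
    (g : I -> 'rV[R]_N -> R) x0 :
  convex_rV X -> (forall i, affine (g i)) -> X x0 ->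
  (forall x, X x ->
     \sum_(i <- r) pos_part (g i x0) ^+ 2 <= \sum_(i <- r) pos_part (g i x) ^+ 2) ->
  forall x, X x -> 0 <= \sum_(i <- r) pos_part (g i x0) * (g i x - g i x0).
Proof.
move=> cvX affg Xx0 x0_min x Xx; set S := \sum_(i <- r) _.
rewrite leNgt; apply/negP => S_lt0.
pose K := \sum_(i <- r) (g i x - g i x0) ^+ 2.
have K_ge0 : 0 <= K by apply: sumr_ge0 => i _; exact: sqr_ge0.
(* any step 0 < s <= 1 with s K <= - S decreases the penalty *)
pose s := - S / (K - S).
have s_gt0 : 0 < s by rewrite divr_gt0 //; lra.
have s_le1 : s <= 1 by rewrite ler_pdivrMr ?mul1r; lra.
have sK_le : s * K <= - S.
  by rewrite mulrAC ler_pdivrMr; [nra | lra].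
have Xxs : X (x0 + s *: (x - x0)) by apply: cvX; rewrite // ltW.
have := x0_min _ Xxs; apply/negP; rewrite -ltNge.
have -> : \sum_(i <- r) pos_part (g i (x0 + s *: (x - x0))) ^+ 2
    = \sum_(i <- r) pos_part (g i x0 + s * (g i x - g i x0)) ^+ 2.
  by apply: eq_bigr => i _; rewrite affg.
apply: le_lt_trans (ler_sum _ (fun i _ => sqr_pos_partD _ _)) _.
rewrite !big_split /=.
have -> : \sum_(i <- r) 2 * pos_part (g i x0) * (s * (g i x - g i x0)) = 2 * s * S.
  by rewrite /S !mulr_sumr; apply: eq_bigr => i _; ring.
have -> : \sum_(i <- r) (s * (g i x - g i x0)) ^+ 2 = s ^+ 2 * K.
  by rewrite /K mulr_sumr; apply: eq_bigr => i _; ring.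
nra.
Qed.

Lemma convex_rV_combination M (Y : set 'rV[R]_M) (T : Type) (f : T -> 'rV[R]_M -> R)
    (I : Type) (r : seq I) (w : I -> R) (y : I -> 'rV[R]_M) :
  convex_rV Y -> Y !=set0 -> (forall x, affine (f x)) ->
  (forall i, 0 <= w i) -> (forall i, Y (y i)) ->
  exists2 y0, Y y0 & forall x, (\sum_(i <- r) w i) * f x y0 = \sum_(i <- r) w i * f x (y i).
Proof.
move=> cvY [ya Yya] affF w_ge0 Yy; elim: r => [|i r [y' Yy' IH]].
  by exists ya => // x; rewrite !big_nil mul0r.
have W_ge0 : 0 <= \sum_(j <- r) w j by exact: sumr_ge0.
have [W0|W_neq0] := eqVneq (w i + \sum_(j <- r) w j) 0.
  have [wi0 W'0] : w i = 0 /\ \sum_(j <- r) w j = 0.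
    by move: (w_ge0 i) W_ge0 W0; lra.
  by exists y' => // x; rewrite !big_cons -IH W'0 wi0; ring.
have W_gt0 : 0 < w i + \sum_(j <- r) w j by rewrite lt_def W_neq0 addr_ge0.
exists (y' + (w i / (w i + \sum_(j <- r) w j)) *: (y i - y')).
  apply: cvY Yy' (Yy i) _; rewrite divr_ge0 ?(ltW W_gt0) //=.
  by rewrite ler_pdivrMr // mul1r lerDl.
by move=> x; rewrite !big_cons affF -IH; field.
Qed.

Section StrictMinimax.
Variables (N M : nat) (X : set 'rV[R]_N) (Y : set 'rV[R]_M).
Variable f : 'rV[R]_N -> 'rV[R]_M -> R.
Hypotheses (X_compact : compact X) (X_neq0 : X !=set0).
Hypotheses (X_convex : convex_rV X) (Y_convex : convex_rV Y).
Hypothesis f_continuous_l : forall y, continuous (f^~ y).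
Hypotheses (f_affine_l : forall y, affine (f^~ y)) (f_affine_r : forall x, affine (f x)).

Lemma finite_strict_minimax (I : finType) (y : I -> 'rV[R]_M) (c : R) :
  (forall i, Y (y i)) -> (forall x, X x -> exists i, f x (y i) < c) ->
  exists2 y0, Y y0 & forall x, X x -> f x y0 < c.
Proof.
move=> Yy X_cover.
pose penalty x := \sum_i pos_part (c - f x (y i)) ^+ 2.
have penalty_cont : continuous penalty.
  apply: continuous_big => [|i _ x]; first exact: add_continuous.
  have gap_cont : {for x, continuous (fun x => c - f x (y i))}.
    by apply: continuousB; [exact: cst_continuous | exact: f_continuous_l].
  apply: (continuous_comp (f := fun x => pos_part (c - f x (y i))) (g := fun t => t ^+ 2));
    last exact: exprn_continuous.
  by apply: continuous_comp gap_cont _; exact: pos_part_continuous.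
have [x0 /[!in_setE] Xx0 x0_min] := EVT_min_rV X_neq0 X_compact (continuous_subspaceT penalty_cont).
pose a i := pos_part (c - f x0 (y i)).
have first_order x : X x -> \sum_i a i * f x (y i) <= \sum_i a i * f x0 (y i).
  move=> Xx; rewrite -subr_ge0 -sumrB.
  have := sum_sqr_pos_part_minimizer (r := index_enum I) (g := fun i x => c - f x (y i))
    X_convex (fun i => affineBl c (f_affine_l (y i))) Xx0
    (fun x' Xx' => x0_min x' (mem_set Xx')) Xx.
  by rewrite (eq_bigr (fun i => a i * f x0 (y i) - a i * f x (y i))) // => i _; rewrite /a; ring.
have [i0 fi0_lt] := X_cover _ Xx0.
have ai0_gt0 : 0 < a i0 by rewrite /a /pos_part lt_max subr_gt0 fi0_lt.
have W_gt0 : 0 < \sum_i a i.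
  by rewrite (bigD1 i0) //= ltr_wpDr // sumr_ge0 // => i _; exact: pos_part_ge0.
have A_gt0 : 0 < \sum_i a i ^+ 2.
  rewrite (bigD1 i0) //= ltr_wpDr ?exprn_gt0 // sumr_ge0 // => i _; exact: sqr_ge0.
have value_x0 : \sum_i a i * f x0 (y i) = c * \sum_i a i - \sum_i a i ^+ 2.
  rewrite mulr_sumr -sumrB; apply: eq_bigr => i _.
  by rewrite -pos_partM -/(a i); ring.
have [y0 Yy0 y0_val] := convex_rV_combination (index_enum I) (w := a) Y_convex
  (ex_intro _ _ (Yy i0)) f_affine_r (fun i => pos_part_ge0 _) Yy.
exists y0 => // x Xx; rewrite -(ltr_pM2l W_gt0) y0_val.
by apply: le_lt_trans (first_order _ Xx) _; rewrite value_x0 mulrC; lra.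
Qed.

Lemma strict_minimax c :
  (forall x, X x -> exists2 y, Y y & f x y < c) ->
  exists2 y0, Y y0 & forall x, X x -> f x y0 < c.
Proof.
move=> X_cover; have : cover_compact X by rewrite -compact_cover.
move=> /(_ _ Y (fun y => [set x | f x y < c])) [y _ | x Xx | ys ysY Xys].
- by apply: (open_comp (f := f^~ y) (D := [set t | t < c])) => [x _|];
    [exact: f_continuous_l | exact: open_lt].
- by have [y Yy fxy_lt] := X_cover x Xx; exists y.
apply: (finite_strict_minimax (I := ys) (y := val)) => [i | x /Xys [y ys_y fxy_lt]].
  by rewrite -in_setE; apply/ysY/fsvalP.
by exists (FSetSub ys_y).
Qed.

Lemma minimax_alternative c :
  (exists2 x, X x & forall y, Y y -> c <= f x y) \/
  (exists2 y, Y y & forall x, X x -> f x y < c).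
Proof.
have [|no_x] := pselect (exists2 x, X x & forall y, Y y -> c <= f x y); first by left.
right; apply: strict_minimax => x Xx.
have [//|no_y] := pselect (exists2 y, Y y & f x y < c).
exfalso; apply: no_x; exists x => // y Yy; rewrite leNgt; apply/negP => fxy_lt.
by apply: no_y; exists y.
Qed.

End StrictMinimax.

Theorem saddle_point N M (X : set 'rV[R]_N) (Y : set 'rV[R]_M)
    (f : 'rV[R]_N -> 'rV[R]_M -> R) :
  compact X -> compact Y -> X !=set0 -> Y !=set0 -> convex_rV X -> convex_rV Y ->
  (forall y, continuous (f^~ y)) -> (forall x, continuous (f x)) ->
  (forall y, affine (f^~ y)) -> (forall x, affine (f x)) ->
  exists x0 y0, [/\ X x0, Y y0 & forall x y, X x -> Y y ->
    f x y0 <= f x0 y0 /\ f x0 y0 <= f x0 y].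
Proof.
move=> cX cY X_neq0 Y_neq0 cvX cvY fcl fcr fal far.
pose E := [set c | exists2 x, X x & forall y, Y y -> c <= f x y].
have [xa Xxa] := X_neq0; have [ya Yya] := Y_neq0.
have hasE : has_sup E.
  split.
    have [y0 _ y0_min] := EVT_min_rV Y_neq0 cY (continuous_subspaceT (fcr xa)).
    by exists (f xa y0), xa => // y Yy; apply/y0_min/mem_set.
  have [x0 _ x0_max] := EVT_max_rV X_neq0 cX (continuous_subspaceT (fcl ya)).
  exists (f x0 ya) => c [x Xx /(_ _ Yya) le_c]; exact/(le_trans le_c)/x0_max/mem_set.
pose v := sup E.
have [xs Xxs xs_ge] : exists2 x, X x & forall y, Y y -> v <= f x y.
  have [//|[y1 Yy1 y1_lt]] := minimax_alternative cX X_neq0 cvX cvY fcl fal far v.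
  have [x1 /set_mem Xx1 x1_max] := EVT_max_rV X_neq0 cX (continuous_subspaceT (fcl y1)).
  suff : v <= f x1 y1 by rewrite leNgt y1_lt.
  apply: ge_sup => [|c [x Xx /(_ _ Yy1) le_c]]; first by case: hasE.
  exact/(le_trans le_c)/x1_max/mem_set.
have [ys Yys ys_le] : exists2 y, Y y & forall x, X x -> f x y <= v.
  have [[y Yy y_ge]|[x2 Xx2 x2_lt]] := minimax_alternative cY Y_neq0 cvY cvX
      (fun x y => continuousN (fcr x y)) (fun x => affineN (far x))
      (fun y => affineN (fal y)) (- v).
    by exists y => // x Xx; rewrite -lerN2 y_ge.
  have [y2 /set_mem Yy2 y2_min] := EVT_min_rV Y_neq0 cY (continuous_subspaceT (fcr x2)).
  suff : f x2 y2 <= v by rewrite leNgt -ltrN2 x2_lt.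
  apply: sup_upper_bound => //; exists x2 => // y Yy; exact/y2_min/mem_set.
exists xs, ys; split => // x y Xx Yy.
by split; [apply: le_trans (ys_le _ Xx) (xs_ge _ Yys) |
           apply: le_trans (ys_le _ Xxs) (xs_ge _ Yy)].
Qed.

End Minimax.

Section ComplexVectors.
Context {R : realType}.
Local Notation C := R[i].
Local Notation Re := (@complex.Re R).
Local Notation Im := (@complex.Im R).

Definition complexify n (p : 'rV[R]_(n + n)) : 'cV[C]_n :=
  \col_i Complex (p 0 (lshift n i)) (p 0 (rshift n i)).

Definition realify n (u : 'cV[C]_n) : 'rV[R]_(n + n) :=
  row_mx (\row_i Re (u i 0)) (\row_i Im (u i 0)).

Lemma realifyK n : cancel (@realify n) (@complexify n).
Proof.
move=> u; apply/matrixP => i j; rewrite mxE row_mxEl row_mxEr !mxE (ord1 j).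
by case: (u i 0).
Qed.

Lemma Re_complexify n (p : 'rV[R]_(n + n)) i : Re (complexify p i 0) = p 0 (lshift n i).
Proof. by rewrite mxE. Qed.

Lemma Im_complexify n (p : 'rV[R]_(n + n)) i : Im (complexify p i 0) = p 0 (rshift n i).
Proof. by rewrite mxE. Qed.

Lemma complexify_segment n (p1 p2 : 'rV[R]_(n + n)) (s : R) :
  complexify (p1 + s *: (p2 - p1)) =
  complexify p1 + (s%:C)%C *: (complexify p2 - complexify p1).
Proof.
apply/matrixP => i j; rewrite !mxE /=.
by apply/eqP; rewrite eq_complex /=; apply/andP; split; apply/eqP; ring.
Qed.

Lemma Re_segment (z1 z2 : C) (s : R) :
  Re (z1 + (s%:C)%C * (z2 - z1)) = Re z1 + s * (Re z2 - Re z1).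
Proof. by case: z1 => x1 y1; case: z2 => x2 y2 /=; ring. Qed.

Lemma Im_segment (z1 z2 : C) (s : R) :
  Im (z1 + (s%:C)%C * (z2 - z1)) = Im z1 + s * (Im z2 - Im z1).
Proof. by case: z1 => x1 y1; case: z2 => x2 y2 /=; ring. Qed.

Lemma mulmx_segment k n (M : 'M[C]_(k, n)) (u1 u2 : 'cV[C]_n) (s : R) j :
  (M *m (u1 + (s%:C)%C *: (u2 - u1))) j 0 =
  (M *m u1) j 0 + (s%:C)%C * ((M *m u2) j 0 - (M *m u1) j 0).
Proof. by rewrite mulmxDr -scalemxAr mulmxBr !mxE. Qed.

Definition reim_form n (a b : 'I_n -> R) (p : 'rV[R]_(n + n)) : R :=
  \sum_i (a i * p 0 (lshift n i) + b i * p 0 (rshift n i)).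

Lemma reim_form_continuous n (a b : 'I_n -> R) : continuous (reim_form a b).
Proof.
have term_cont i :
    continuous (fun p : 'rV[R]_(n + n) => a i * p 0 (lshift n i) + b i * p 0 (rshift n i)).
  move=> p; apply: (continuousD (f := fun p : 'rV[R]_(n + n) => a i * p 0 (lshift n i)));
  by apply: continuousM; (exact: cst_continuous || exact: coord_continuous).
by apply: continuous_big => [|i _]; [exact: add_continuous | exact: term_cont].
Qed.

Lemma reim_form_affine n (a b : 'I_n -> R) : affine (reim_form a b).
Proof.
move=> p1 p2 s; rewrite /reim_form -sumrB mulr_sumr -big_split /=.
by apply: eq_bigr => i _; rewrite !mxE; ring.
Qed.

Lemma Re_mulmx_complexify k n (M : 'M[C]_(k, n)) (p : 'rV[R]_(n + n)) j :
  Re ((M *m complexify p) j 0) = reim_form (fun i => Re (M j i)) (fun i => - Im (M j i)) p.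
Proof.
rewrite mxE raddf_sum; apply: eq_bigr => i _.
by rewrite mxE; case: (M j i) => x y /=; ring.
Qed.

Lemma Im_mulmx_complexify k n (M : 'M[C]_(k, n)) (p : 'rV[R]_(n + n)) j :
  Im ((M *m complexify p) j 0) = reim_form (fun i => Im (M j i)) (fun i => Re (M j i)) p.
Proof.
rewrite mxE raddf_sum; apply: eq_bigr => i _.
by rewrite mxE; case: (M j i) => x y /=; ring.
Qed.

Lemma payoff_complexify_l n m (A : 'M[C]_(n, m)) (p : 'rV[R]_(n + n)) v :
  payoff A (complexify p) v =
  reim_form (fun i => Re ((A *m v) i 0)) (fun i => Im ((A *m v) i 0)) p.
Proof.
rewrite /payoff -mulmxA; move: (A *m v) => w.
rewrite mxE raddf_sum; apply: eq_bigr => i _.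
by rewrite !mxE; case: (w i 0) => x y /=; ring.
Qed.

End ComplexVectors.

Section FeasibleSet.
Context {R : realType}.
Local Notation C := R[i].
Local Notation Re := (@complex.Re R).
Local Notation Im := (@complex.Im R).

Definition sqnorm n (u : 'cV[C]_n) : R :=
  \sum_i (Re (u i 0) ^+ 2 + Im (u i 0) ^+ 2).

Lemma cnorm_le n (u : 'cV[C]_n) a :
  (cnorm u <= a) = (0 <= a) && (sqnorm u <= a ^+ 2).
Proof.
have [a_ge0|a_lt0] := leP 0 a; last first.
  by apply/negbTE; rewrite -ltNge (lt_le_trans a_lt0) ?sqrtr_ge0.
by rewrite -[sqnorm u <= _]ler_sqrt ?sqr_ge0 // sqrtr_sqr (ger0_norm a_ge0).
Qed.

Lemma sqr_segment_le (x y s : R) :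
  0 <= s <= 1 -> (x + s * (y - x)) ^+ 2 <= (1 - s) * x ^+ 2 + s * y ^+ 2.
Proof.
case/andP => s_ge0 s_le1; have s1_ge0 : 0 <= 1 - s by rewrite subr_ge0.
(* the right-hand side minus the left-hand side is s (1 - s) (x - y)^2 *)
have := mulr_ge0 (mulr_ge0 s_ge0 s1_ge0) (sqr_ge0 (x - y)); nra.
Qed.

Lemma sqnorm_segment n (u1 u2 : 'cV[C]_n) (s : R) : 0 <= s <= 1 ->
  sqnorm (u1 + (s%:C)%C *: (u2 - u1)) <= (1 - s) * sqnorm u1 + s * sqnorm u2.
Proof.
move=> s01; rewrite /sqnorm !mulr_sumr -big_split /=; apply: ler_sum => i _.
rewrite !mxE Re_segment Im_segment.
have := sqr_segment_le (Re (u1 i 0)) (Re (u2 i 0)) s01.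
have := sqr_segment_le (Im (u1 i 0)) (Im (u2 i 0)) s01.
lra.
Qed.

Lemma S1_segment n l a (B : 'M[C]_(l, n)) b (u1 u2 : 'cV[C]_n) (s : R) :
  S1 a B b u1 -> S1 a B b u2 -> 0 <= s <= 1 -> S1 a B b (u1 + (s%:C)%C *: (u2 - u1)).
Proof.
move=> [/[!cnorm_le] /andP[a_ge0 norm1] Re1 sum1 B1] [/[!cnorm_le] /andP[_ norm2] Re2 sum2 B2].
move=> s01; have /andP[s_ge0 s_le1] := s01.
have entry i : (u1 + (s%:C)%C *: (u2 - u1)) i 0 = u1 i 0 + (s%:C)%C * (u2 i 0 - u1 i 0).
  by rewrite !mxE.
split.
- rewrite cnorm_le a_ge0 /=; apply: le_trans (sqnorm_segment _ _ s01) _; nra.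
- by move=> i; rewrite entry Re_segment; have := Re1 i; have := Re2 i; nra.
- rewrite (eq_bigr _ (fun i _ => entry i)) big_split /= -mulr_sumr sumrB sum1 sum2.
  by rewrite subrr mulr0 addr0.
- by move=> k; rewrite mulmx_segment Re_segment; have := B1 k; have := B2 k; nra.
Qed.

Definition S1_rV n l a (B : 'M[C]_(l, n)) b : set 'rV[R]_(n + n) :=
  [set p | S1 a B b (complexify p)].

Lemma S1_rV_convex {n l a} {B : 'M[C]_(l, n)} {b} : convex_rV (S1_rV a B b).
Proof.
by move=> p1 p2 s S1p1 S1p2 s01; rewrite /S1_rV /= complexify_segment; exact: S1_segment.
Qed.

Lemma cnorm_complexify n (p : 'rV[R]_(n + n)) :
  cnorm (complexify p) = Num.sqrt (\sum_j p 0 j ^+ 2).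
Proof.
rewrite big_split_ord /= -big_split /=.
by congr Num.sqrt; apply: eq_bigr => i _; rewrite Re_complexify Im_complexify.
Qed.

Lemma coord_le_cnorm n (p : 'rV[R]_(n + n)) j : `|p 0 j| <= cnorm (complexify p).
Proof.
rewrite cnorm_complexify -sqrtr_sqr; apply: ler_wsqrtr.
by rewrite (bigD1 j) //= lerDl sumr_ge0 // => k _; exact: sqr_ge0.
Qed.

Lemma continuous_cnorm_complexify n :
  continuous (fun p : 'rV[R]_(n + n) => cnorm (complexify p)).
Proof.
have sq_cont j : continuous (fun p : 'rV[R]_(n + n) => p 0 j ^+ 2).
  move=> p; apply: (continuous_comp (f := fun p : 'rV[R]_(n + n) => p 0 j) (g := fun t => t ^+ 2));
  [exact: coord_continuous | exact: exprn_continuous].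
have sum_cont : continuous (fun p : 'rV[R]_(n + n) => \sum_j p 0 j ^+ 2).
  by apply: continuous_big => [|j _]; [exact: add_continuous | exact: sq_cont].
have -> : (fun p : 'rV[R]_(n + n) => cnorm (complexify p)) =
    Num.sqrt \o (fun p => \sum_j p 0 j ^+ 2).
  by apply/funext => p; rewrite cnorm_complexify.
by move=> p; apply: continuous_comp (sum_cont p) _; exact: sqrt_continuous.
Qed.

Lemma closed_le_fun (T : topologicalType) (g : T -> R) c :
  continuous g -> closed [set t | g t <= c].
Proof.
by move=> g_cont; apply: (preimage_closed (f := g) (D := [set x | x <= c])) => [t _|];
  [exact: g_cont | exact: closed_le].
Qed.

Lemma closed_ge_fun (T : topologicalType) (g : T -> R) c :
  continuous g -> closed [set t | c <= g t].
Proof.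
by move=> g_cont; apply: (preimage_closed (f := g) (D := [set x | c <= x])) => [t _|];
  [exact: g_cont | exact: closed_ge].
Qed.

Lemma closed_eq_fun (T : topologicalType) (g : T -> R) c :
  continuous g -> closed [set t | g t = c].
Proof.
by move=> g_cont; apply: (preimage_closed (f := g) (D := [set x | x = c])) => [t _|];
  [exact: g_cont | exact: closed_eq].
Qed.

Lemma sum_col_mulmx n (u : 'cV[C]_n) : \sum_i u i 0 = ((const_mx 1 : 'rV[C]_n) *m u) 0 0.
Proof. by rewrite mxE; apply: eq_bigr => i _; rewrite mxE mul1r. Qed.

Lemma S1_rV_closed n l a (B : 'M[C]_(l, n)) b : closed (S1_rV a B b).
Proof.
have -> : S1_rV a B b =
    [set p | cnorm (complexify p) <= a]
    `&` \bigcap_i [set p | 0 <= p 0 (lshift n i)]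
    `&` [set p | Re (((const_mx 1 : 'rV[C]_n) *m complexify p) 0 0) = 1]
    `&` [set p | Im (((const_mx 1 : 'rV[C]_n) *m complexify p) 0 0) = 0]
    `&` \bigcap_k [set p | Re ((B *m complexify p) k 0) <= b k 0].
  apply/seteqP; split => p /=.
    case=> norm_le Re_ge0; rewrite sum_col_mulmx => -> B_le.
    split; [split; [split; [split |] |] |] => // [i _ | k _] /=.
      by rewrite -Re_complexify.
    exact: B_le.
  move=> [[[[norm_le Re_ge0] sum_Re] sum_Im] B_le]; split => // [i | | k].
  - by rewrite Re_complexify; exact: Re_ge0.
  - by rewrite sum_col_mulmx; apply/eqP; rewrite eq_complex sum_Re sum_Im !eqxx.
  - exact: B_le.
apply: closedI; [apply: closedI; [apply: closedI; [apply: closedI |] |] |].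
- exact/closed_le_fun/continuous_cnorm_complexify.
- by apply: closed_bigI => i _; apply: closed_ge_fun; exact: coord_continuous.
- by apply: closed_eq_fun; under eq_fun do rewrite Re_mulmx_complexify; exact: reim_form_continuous.
- by apply: closed_eq_fun; under eq_fun do rewrite Im_mulmx_complexify; exact: reim_form_continuous.
- apply: closed_bigI => k _; apply: closed_le_fun.
  by under eq_fun do rewrite Re_mulmx_complexify; exact: reim_form_continuous.
Qed.

Lemma S1_rV_compact {n l a} {B : 'M[C]_(l, n)} {b} : compact (S1_rV a B b).
Proof.
apply: bounded_closed_compact; last exact: S1_rV_closed.
exists a; split; first by rewrite num_real.
move=> M a_lt_M p [norm_le _ _ _] /=; apply: le_trans (ltW a_lt_M).
rewrite -[ `|p| ]/(mx_norm p) mx_normrE; apply: bigmax_le => [|[i j] _ /=].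
  by apply: le_trans norm_le; rewrite cnorm_complexify sqrtr_ge0.
by rewrite (ord1 i); exact: le_trans (coord_le_cnorm p j) norm_le.
Qed.

Lemma S2_S1 m q a (D : 'M[C]_(q, m)) d (v : 'cV[C]_m) : S2 a D d v <-> S1 a (- D) (- d) v.
Proof.
have E k : Re ((- D *m v) k 0) <= (- d) k 0 <-> d k 0 <= Re ((D *m v) k 0).
  by rewrite mulNmx !mxE raddfN lerN2.
by split=> -[? ? ? D_ge]; split=> // k; apply/E.
Qed.

Lemma S1_strictW n l a (B : 'M[C]_(l, n)) b (u : 'cV[C]_n) : S1_strict a B b u -> S1 a B b u.
Proof. by case=> norm_lt Re_gt0 sum1 B_lt; split=> // [|i|k]; apply: ltW. Qed.

Lemma S2_strictW m q a (D : 'M[C]_(q, m)) d (v : 'cV[C]_m) : S2_strict a D d v -> S2 a D d v.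
Proof. by case=> norm_lt Re_gt0 sum1 D_gt; split=> // [|i|k]; apply: ltW. Qed.

Lemma payoff_continuous_l {n m} {A : 'M[C]_(n, m)} {v} :
  continuous (fun p => payoff A (complexify p) v).
Proof. by under eq_fun do rewrite payoff_complexify_l; exact: reim_form_continuous. Qed.

Lemma payoff_continuous_r {n m} {A : 'M[C]_(n, m)} {u} :
  continuous (fun r => payoff A u (complexify r)).
Proof.
by rewrite /payoff; under eq_fun do rewrite Re_mulmx_complexify; exact: reim_form_continuous.
Qed.

Lemma payoff_affine_l {n m} {A : 'M[C]_(n, m)} {v} : affine (fun p => payoff A (complexify p) v).
Proof. by move=> p1 p2 s; rewrite !payoff_complexify_l; exact: reim_form_affine. Qed.

Lemma payoff_affine_r {n m} {A : 'M[C]_(n, m)} {u} : affine (fun r => payoff A u (complexify r)).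
Proof. by move=> r1 r2 s; rewrite /payoff !Re_mulmx_complexify; exact: reim_form_affine. Qed.

Lemma S1_rV_realify n l a (B : 'M[C]_(l, n)) b (u : 'cV[C]_n) :
  S1 a B b u -> S1_rV a B b (realify u).
Proof. by rewrite /S1_rV /= realifyK. Qed.

End FeasibleSet.

Theorem theorem4 (R : realType) (n m l q : nat)
  (A : 'M[R[i]]_(n, m)) (alpha1 alpha2 : R)
  (B : 'M[R[i]]_(l, n)) (b : 'cV[R]_l)
  (D : 'M[R[i]]_(q, m)) (d : 'cV[R]_q) :
  1 / Num.sqrt (n%:R) <= alpha1 ->
  1 / Num.sqrt (m%:R) <= alpha2 ->
  (exists u, S1_strict alpha1 B b u) ->
  (exists v, S2_strict alpha2 D d v) ->
  exists ustar vstar,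
    [/\ S1 alpha1 B b ustar, S2 alpha2 D d vstar
      & forall u v, S1 alpha1 B b u -> S2 alpha2 D d v ->
          payoff A u vstar <= payoff A ustar vstar /\
          payoff A ustar vstar <= payoff A ustar v].
Proof.
move=> _ _ [u0 /S1_strictW S1u0] [v0 /S2_strictW /S2_S1 S1v0].
have [p0 [r0 [S1p0 S1r0 saddle]]] := saddle_point (X := S1_rV alpha1 B b)
  (Y := S1_rV alpha2 (- D) (- d)) (f := fun p r => payoff A (complexify p) (complexify r))
  S1_rV_compact S1_rV_compact (ex_intro _ _ (S1_rV_realify S1u0))
  (ex_intro _ _ (S1_rV_realify S1v0)) S1_rV_convex S1_rV_convex
  (fun=> payoff_continuous_l) (fun=> payoff_continuous_r)
  (fun=> payoff_affine_l) (fun=> payoff_affine_r).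
exists (complexify p0), (complexify r0); split => [//||u v S1u /S2_S1 S1v]; first exact/S2_S1.
by have := saddle _ _ (S1_rV_realify S1u) (S1_rV_realify S1v); rewrite !realifyK.
Qed.
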